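(* Let $\alpha\in(0,1)$ and let $m\ge1$ be an integer. The $(m,m)$ Padé approximant $r_m$ of $(1+t)^{-\alpha}$ (normalized so that its denominator equals $1$ at $t=0$) is monotonically decreasing on $[0,\infty)$.
   Context: The $(m,m)$ Padé approximant of $(1+t)^{-\alpha}$ is the rational function $r_m=P_m/Q_m$ with $P_m,Q_m$ polynomials of degree at most $m$, $Q_m(0)=1$, whose Maclaurin expansion agrees with that of $(1+t)^{-\alpha}$ up to and including the coefficient of $t^{2m}$. *)

From HB Require Import structures.
From mathcomp Require Import all_boot all_order all_algebra.
From mathcomp Require Import reals.
Set Implicit Arguments. Unset Strict Implicit. Unset Printing Implicit Defensive.
Import Order.TTheory GRing.Theory Num.Theory.
Local Open Scope ring_scope.

(* Generalized binomial coefficient  binom(a, k) = prod_{i<k} (a - i)/(i+1).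
   The Maclaurin coefficients of (1+t)^(-alpha) are gbinom (-alpha) k. *)
Definition gbinom (R : realType) (a : R) (k : nat) : R :=
  \prod_(i < k) ((a - i%:R) / (i.+1)%:R).

(* Maclaurin coefficients c of the rational function P/Q (with Q(0) = 1):
   the (unique) power series c with Q * c = P, i.e. the Cauchy product
   of the coefficient sequence of Q with c equals the coefficient
   sequence of P. *)
Definition is_maclaurin_of_ratio (R : realType) (P Q : {poly R}) (c : nat -> R) : Prop :=
  forall k : nat, \sum_(j < k.+1) Q`_j * c (k - j)%N = P`_k.

Definition is_pade_mm (R : realType) (m : nat) (f : nat -> R) (P Q : {poly R}) : Prop :=
  [/\ (size P <= m.+1)%N, (size Q <= m.+1)%N, Q.[0] = 1 &
      exists c : nat -> R, is_maclaurin_of_ratio P Q c /\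
                           (forall k : nat, (k <= 2 * m)%N -> c k = f k)].

From mathcomp Require Import all_boot all_order all_algebra.
From mathcomp Require Import reals normedtype derive realfun.
From mathcomp Require Import ring lra zify.

(* Let P_b := 2F1(-m, b - m; -2m; -t), a polynomial of degree m with positive
   coefficients when b < 1, and put P := P_alpha, Q := P_(-alpha).  By Euler's
   transformation 2F1(a, b; c; z) = (1 - z)^(c - a - b) 2F1(c - a, c - b; c; z),
   Q(t) (1 + t)^(-alpha) = P(t) + O(t^(2m+1)).  Differentiating
   (1 + t)^alpha P / Q = 1 + O(t^(2m+1)) then gives
     (1 + t) (P' Q - P Q') + alpha P Q = alpha p_m q_m t^(2m).
   Hence P and Q are coprime, which makes P / Q the unique Pade approximant, and
   since P Q >= (1 + p_m t^m) (1 + q_m t^m) > p_m q_m t^(2m) for t >= 0, the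
   Wronskian P' Q - P Q' is negative on [0, oo). *)

Set Implicit Arguments.
Unset Strict Implicit.
Unset Printing Implicit Defensive.

Import Order.TTheory GRing.Theory Num.Theory.
Import numFieldNormedType.Exports.
Local Open Scope ring_scope.

Section PolyCoef.
Variable R : nzRingType.
Implicit Types p q : {poly R}.

Lemma size_deriv_leq p n : (size p <= n.+1)%N -> (size p^`() <= n)%N.
Proof.
move=> sp; apply/leq_sizeP => j jn.
by rewrite coef_deriv (leq_sizeP _ _ sp) ?mul0rn.
Qed.

Lemma size_polyMleq_add p q i j :
  (size p <= i)%N -> (size q <= j)%N -> (size (p * q)%R <= (i + j).-1)%N.
Proof.
move=> sp sq; apply: leq_trans (size_polyMleq _ _) _.
by rewrite -!subn1 leq_sub2r ?leq_add.
Qed.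

Lemma coefM_top p q i j : (size p <= i.+1)%N -> (size q <= j.+1)%N ->
  (p * q)`_(i + j) = p`_i * q`_j.
Proof.
move=> sp sq; have hi : (i < (i + j).+1)%N by lia.
rewrite coefM (bigD1 (Ordinal hi)) //= addKn big1 ?addr0 // => -[l hl] /= /eqP/val_eqP/= li.
case: (ltngtP l i) li => // [lti|gti] _.
  by rewrite [q`_ _](leq_sizeP _ _ sq) ?mulr0 //; lia.
by rewrite (leq_sizeP _ _ sp) ?mul0r.
Qed.

End PolyCoef.

Section DvdpXn.
Variable R : idomainType.
Implicit Types p : {poly R}.

Lemma dvdp_XnP n p : reflect (forall k, (k < n)%N -> p`_k = 0) ('X^n %| p).
Proof.
rewrite /dvdp -Pdiv.IdomainMonic.take_poly_modp; apply: (iffP eqP) => [p0 k kn|p0].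
  by have := coef_take_poly n p k; rewrite kn p0 coef0.
by apply/polyP => k; rewrite coef_take_poly coef0; case: ifP => // /p0.
Qed.

Lemma dvdp_Xn_deriv n p : 'X^(n.+1) %| p -> 'X^n %| p^`().
Proof.
by move=> /dvdp_XnP p0; apply/dvdp_XnP => k kn; rewrite coef_deriv p0 ?mul0rn.
Qed.

Lemma dvdp_Xn_Xderiv n p : 'X^n %| p -> 'X^n %| 'X * p^`().
Proof.
case: n => [|n] pn; first by rewrite expr0 dvd1p.
by rewrite exprS dvdp_mul // dvdp_Xn_deriv.
Qed.

Lemma coprimep_Xn p n : p.[0] != 0 -> coprimep p 'X^n.
Proof.
move=> p0; apply: coprimep_expr.
by rewrite -[X in coprimep _ X]subr0 -polyC0 coprimep_XsubC.
Qed.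

Lemma coprimep_Xn_1addX n : coprimep ('X^n : {poly R}) (1 + 'X).
Proof. by rewrite coprimep_sym coprimep_Xn // !hornerE oner_eq0. Qed.

Lemma dvdp_Xn_size_eq0 n p : (size p <= n)%N -> 'X^n %| p -> p = 0.
Proof.
move=> sp /dvdp_XnP p0; apply/polyP => k; rewrite coef0.
by case: (ltnP k n) => [/p0 //|nk]; rewrite nth_default // (leq_trans sp).
Qed.

Lemma dvdp_Xn_size_eq n p : (size p <= n.+1)%N -> 'X^n %| p -> p = p`_n *: 'X^n.
Proof.
move=> sp /dvdp_XnP p0; apply/polyP => k; rewrite coefZ coefXn.
case: (ltngtP k n) => [/p0 -> | nk | ->]; rewrite ?mulr0 ?mulr1 //.
by rewrite nth_default // (leq_trans sp).
Qed.

End DvdpXn.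

Section HypergeometricOperator.
Variable R : comNzRingType.
Implicit Types (a b c : R) (p G F E P Q : {poly R}).

(* hyp_op a b c annihilates 2F1(a, b; c; -t), and binom_op c annihilates (1 + t)^(-c). *)
Definition hyp_op a b c p : {poly R} :=
  'X * (1 + 'X) * p^`()^`() + (c%:P + (a + b + 1)%:P * 'X) * p^`() + (a * b)%:P * p.

Definition binom_op c F : {poly R} := (1 + 'X) * F^`() + c%:P * F.

Lemma coef_hyp_op a b c p k : (hyp_op a b c p)`_k =
  k.+1%:R * (k%:R + c) * p`_k.+1 + (k%:R + a) * (k%:R + b) * p`_k.
Proof.
have -> : hyp_op a b c p = 'X * p^`()^`() + 'X * ('X * p^`()^`()) + c%:P * p^`()
    + (a + b + 1)%:P * ('X * p^`()) + (a * b)%:P * p by rewrite /hyp_op; ring.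
rewrite !coefD !coefCM !coefXM !coef_deriv.
by case: k => [|[|k]] /=; rewrite ?coefXM ?coef_deriv /=; ring.
Qed.

Lemma hyp_opB a b c p q : hyp_op a b c (p - q) = hyp_op a b c p - hyp_op a b c q.
Proof. by rewrite /hyp_op !derivB; ring. Qed.

(* Euler's transformation, up to multiples of binom_op c F. *)
Lemma hyp_op_euler a b c G F :
  (1 + 'X) * hyp_op (b + c) (a + c) (a + b + c) (G * F) =
  F * (1 + 'X) * hyp_op a b (a + b + c) G
  + (2%:R * 'X * (1 + 'X) * G^`() - (1 + c)%:P * 'X * G
     + ((a + b + c)%:P + (a + b + 2 * c + 1)%:P * 'X) * G) * binom_op c F
  + (1 + 'X) * G * ('X * (binom_op c F)^`()).
Proof.
rewrite /hyp_op /binom_op !(derivM, derivD, derivX, derivC) /=.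
by rewrite !(polyCD, polyCM, polyC1); ring.
Qed.

(* Equals (1 + t)^(1 - c) Q^2 (d/dt) ((1 + t)^c P / Q). *)
Definition twisted_wronskian c P Q : {poly R} :=
  (1 + 'X) * (P^`() * Q - P * Q^`()) + c%:P * (P * Q).

Lemma twisted_wronskian_residual c Q F E :
  twisted_wronskian c (Q * F - E) Q =
  (Q * Q) * binom_op c F - c%:P * Q * E + (1 + 'X) * (E * Q^`() - E^`() * Q).
Proof. by rewrite /twisted_wronskian /binom_op !(derivM, derivB); ring. Qed.

Lemma size_wronskian P Q n : (size P <= n.+1)%N -> (size Q <= n.+1)%N ->
  (size (P^`() * Q - P * Q^`())%R <= 2 * n)%N.
Proof.
move=> sP sQ; have sP' := size_deriv_leq sP; have sQ' := size_deriv_leq sQ.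
apply: leq_trans (size_polyD _ _) _; rewrite size_polyN geq_max.
by rewrite (leq_trans (size_polyMleq_add sP' sQ)) ?(leq_trans (size_polyMleq_add sP sQ')) //; lia.
Qed.

Lemma size_twisted_wronskian c P Q n : (size P <= n.+1)%N -> (size Q <= n.+1)%N ->
  (size (twisted_wronskian c P Q) <= (2 * n).+1)%N.
Proof.
move=> sP sQ; have sPQ : (size (P * Q)%R <= (2 * n).+1)%N.
  by rewrite (leq_trans (size_polyMleq_add sP sQ)) //; lia.
rewrite /twisted_wronskian mul_polyC.
apply: leq_trans (size_polyD _ _) _; rewrite geq_max (leq_trans (size_scale_leq _ _)) //.
rewrite andbT (leq_trans (size_polyMleq_add (leqnn _) (size_wronskian sP sQ))) //.
by rewrite addrC -polyC1 size_XaddC; lia.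
Qed.

Lemma coef_twisted_wronskian_top c P Q n : (size P <= n.+1)%N -> (size Q <= n.+1)%N ->
  (twisted_wronskian c P Q)`_(2 * n) = c * P`_n * Q`_n.
Proof.
move=> sP sQ; have sP' := size_deriv_leq sP; have sQ' := size_deriv_leq sQ.
have W_top := leq_sizeP _ _ (size_wronskian sP sQ) _ (leqnn _).
set W := P^`() * Q - P * Q^`() in W_top *.
have W_next : W`_(2 * n).-1 = 0.
  case: n sP sQ sP' sQ' {W_top} => [|n] sP sQ sP' sQ'.
    move: sP' sQ'; rewrite /W => /size_poly_leq0P -> /size_poly_leq0P ->.
    by rewrite mul0r mulr0 subrr coef0.
  rewrite /W coefB (_ : (2 * n.+1).-1 = n + n.+1)%N; last by lia.
  rewrite (coefM_top sP' sQ) addnC (coefM_top sP sQ') !coef_deriv.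
  by rewrite mulrnAl -mulrnAr subrr.
rewrite /twisted_wronskian -/W mulrDl mul1r coefD [(W + _)`_ _]coefD coefXM coefCM.
by rewrite W_top W_next mul2n -addnn (coefM_top sP sQ) if_same !add0r mulrA.
Qed.

End HypergeometricOperator.

Lemma hyp_op_dvdp_Xn_coef_eq0 (R : numDomainType) (a b c : R) n (p : {poly R}) :
  (forall k, (k < n)%N -> k%:R + c != 0) -> p`_0 = 0 ->
  'X^n %| hyp_op a b c p -> forall k, (k <= n)%N -> p`_k = 0.
Proof.
move=> c_neq0 p0 /dvdp_XnP hp; elim=> [|k IH] kn //.
have := hp k kn; rewrite coef_hyp_op IH ?(ltnW kn) // mulr0 addr0.
by move/eqP; rewrite !mulf_eq0 pnatr_eq0 (negbTE (c_neq0 k kn)) => /eqP.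
Qed.

Lemma coprimep_twisted_wronskian (R : idomainType) (c k : R) n (P Q : {poly R}) :
  k != 0 -> Q.[0] != 0 -> twisted_wronskian c P Q = k *: 'X^n -> coprimep Q P.
Proof.
move=> k0 Q0 PQ; apply/coprimepP => d dQ dP.
have dXn : d %| 'X^n.
  rewrite -(dvdpZr _ _ k0) -PQ /twisted_wronskian.
  apply: dvdp_add; apply: dvdp_mull; last exact: dvdp_mulr.
  by apply: dvdp_sub; [apply: dvdp_mull | apply: dvdp_mulr].
by move/coprimepP: (coprimep_Xn n Q0); apply.
Qed.

Lemma pade_uniq (R : fieldType) m (F P Q P0 Q0 : {poly R}) :
  (size P <= m.+1)%N -> (size Q <= m.+1)%N -> (size P0 <= m.+1)%N -> size Q0 = m.+1 ->
  Q.[0] = 1 -> Q0.[0] = 1 -> coprimep Q0 P0 ->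
  'X^((2 * m).+1) %| Q * F - P -> 'X^((2 * m).+1) %| Q0 * F - P0 -> P = P0 /\ Q = Q0.
Proof.
move=> sP sQ sP0 sQ0 Q_at0 Q0_at0 cop PQ_dvd PQ0_dvd.
have Q0_neq0 : Q0 != 0 by rewrite -size_poly_gt0 sQ0.
have Q_neq0 : Q != 0 by apply: contra_eq_neq Q_at0 => ->; rewrite horner0 eq_sym oner_neq0.
have cross : P * Q0 = P0 * Q.
  apply/eqP; rewrite -subr_eq0; apply/eqP; apply: (@dvdp_Xn_size_eq0 _ (2 * m).+1).
    apply: leq_trans (size_polyD _ _) _; rewrite size_polyN geq_max.
    rewrite (leq_trans (size_polyMleq_add sP (eq_leq sQ0))).
      by rewrite (leq_trans (size_polyMleq_add sP0 sQ)) //; lia.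
    by lia.
  have -> : P * Q0 - P0 * Q = (Q0 * F - P0) * Q - (Q * F - P) * Q0 by ring.
  by apply: dvdp_sub; apply: dvdp_mulr.
have Q0_dvd_Q : Q0 %| Q by rewrite -(Gauss_dvdpr _ cop) -cross dvdp_mulIr.
have /eqp_eq lcQ : Q0 %= Q by rewrite -dvdp_size_eqp // eqn_leq dvdp_leq // sQ0 sQ.
have lc_eq : lead_coef Q = lead_coef Q0.
  by have := congr1 (horner^~ 0) lcQ; rewrite !hornerZ Q_at0 Q0_at0 !mulr1.
have eQ : Q = Q0.
  apply: (scalerI (a := lead_coef Q0)); first by rewrite lead_coef_eq0.
  by rewrite -lcQ lc_eq.
by split=> //; apply: (mulIf Q0_neq0); rewrite cross eQ.
Qed.

Lemma horner_ge_coef0_coefn (R : numDomainType) (p : {poly R}) n t :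
  (0 < n)%N -> (size p <= n.+1)%N -> (forall i, 0 <= p`_i) -> 0 <= t ->
  p`_0 + p`_n * t ^+ n <= p.[t].
Proof.
case: n => [|n] // _ sp p_ge0 t0; rewrite (horner_coef_wide _ sp) big_ord_recr /=.
rewrite big_ord_recl /= expr0 mulr1 lerD2r lerDl.
by apply: sumr_ge0 => i _; rewrite mulr_ge0 ?exprn_ge0.
Qed.

Lemma wronskian_lt0 (R : realFieldType) (c : R) n (P Q : {poly R}) t :
  0 < c -> (0 < n)%N -> (size P <= n.+1)%N -> (size Q <= n.+1)%N ->
  (forall i, 0 <= P`_i) -> (forall i, 0 <= Q`_i) -> 0 < P`_0 -> 0 < Q`_0 ->
  twisted_wronskian c P Q = (c * P`_n * Q`_n) *: 'X^(2 * n) -> 0 <= t ->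
  (P^`() * Q - P * Q^`()).[t] < 0.
Proof.
move=> c0 n0 sP sQ P_ge0 Q_ge0 P00 Q00 PQ t0.
have := congr1 (horner^~ t) PQ; rewrite /twisted_wronskian !hornerE /=.
set w := _ - _; rewrite mulnC exprM => E.
have Pt := horner_ge_coef0_coefn n0 sP P_ge0 t0.
have Qt := horner_ge_coef0_coefn n0 sQ Q_ge0 t0.
have Pn := P_ge0 n; have Qn := Q_ge0 n; have u0 : 0 <= t ^+ n := exprn_ge0 _ t0.
have PQ_lt : P`_n * Q`_n * t ^+ n ^+ 2 < P.[t] * Q.[t].
  have P0u := addr_ge0 (ltW P00) (mulr_ge0 Pn u0).
  have Q0u := addr_ge0 (ltW Q00) (mulr_ge0 Qn u0).
  apply: lt_le_trans (ler_pM P0u Q0u Pt Qt).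
  have := mulr_gt0 P00 Q00; have := mulr_ge0 (ltW P00) (mulr_ge0 Qn u0).
  have := mulr_ge0 (mulr_ge0 Pn u0) (ltW Q00); nra.
have : (1 + t) * w < 0.
  have : 0 < c * (P.[t] * Q.[t] - P`_n * Q`_n * t ^+ n ^+ 2) by rewrite mulr_gt0 ?subr_gt0.
  lra.
by rewrite pmulr_rlt0 // ltr_pwDl.
Qed.

Lemma poly_ratio_decr (R : realType) (P Q : {poly R}) :
  (forall x, 0 <= x -> Q.[x] != 0) ->
  (forall x, 0 <= x -> (P^`() * Q - P * Q^`()).[x] < 0) ->
  forall s t, 0 <= s -> s < t -> P.[t] / Q.[t] < P.[s] / Q.[s].
Proof.
move=> Q_neq0 W_lt0 s t s0 st.
pose f x := P.[x] / Q.[x].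
have f_der (x : R) : 0 <= x -> is_derive x 1 f
    (P.[x] *: (- Q.[x] ^- 2 *: Q^`().[x]) + Q.[x]^-1 *: P^`().[x]).
  by move=> x0; apply: is_deriveM; exact: is_deriveV (Q_neq0 x x0) _.
have f'_lt0 (x : R) : 0 <= x -> derive1 f x < 0.
  move=> x0; rewrite derive1E; case: (f_der x x0) => _ ->; rewrite /GRing.scale /=.
  have Qx := Q_neq0 x x0; have Wx := W_lt0 x x0; rewrite !hornerE in Wx.
  have -> : P.[x] * (- Q.[x] ^- 2 * Q^`().[x]) + Q.[x]^-1 * P^`().[x] =
      (P^`().[x] * Q.[x] - P.[x] * Q^`().[x]) / Q.[x] ^+ 2 by field.
  by rewrite pmulr_llt0 // invr_gt0 exprn_even_gt0.
have sx (x : R) : x \in `[s, t] -> 0 <= x by rewrite in_itv /= => /andP[sx _]; lra.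
apply: (@ltr0_derive1_lt_cc _ f s t) => //.
- by move=> x /subset_itv_oo_cc /sx /f_der [].
- by move=> x /subset_itv_oo_cc /sx; apply: f'_lt0.
- by apply: derivable_within_continuous => x /sx /f_der [].
- by rewrite in_itv /= lexx ltW.
- by rewrite in_itv /= lexx ltW.
Qed.

Lemma dvdp_pade_mm (R : realType) m (f : nat -> R) (P Q : {poly R}) :
  is_pade_mm m f P Q -> 'X^((2 * m).+1) %| Q * \poly_(i < (2 * m).+1) f i - P.
Proof.
move=> [_ _ _ [c [QcP cf]]]; apply/dvdp_XnP => k k2m.
rewrite coefB coefM -(QcP k); apply/eqP; rewrite subr_eq0; apply/eqP.
by apply: eq_bigr => -[j jk] _ /=; rewrite coef_poly ifT ?cf //; lia.
Qed.

Section PadeCoefficients.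
Variables (R : realFieldType) (m : nat) (b : R).

(* The coefficients of 2F1(-m, b - m; -2m; -t); they vanish beyond t^m. *)
Definition pade_coef (k : nat) : R :=
  \prod_(i < k) ((m%:R - i%:R) * (m%:R - b - i%:R) / (i.+1%:R * (2 * m%:R - i%:R))).

Definition pade_poly : {poly R} := \poly_(i < m.+1) pade_coef i.

Local Notation pade_op := (hyp_op (- m%:R) (b - m%:R) (- (2 * m%:R))).

Lemma pade_coef0 : pade_coef 0 = 1.
Proof. by rewrite /pade_coef big_ord0. Qed.

Lemma pade_coefS k : pade_coef k.+1 =
  pade_coef k * ((m%:R - k%:R) * (m%:R - b - k%:R) / (k.+1%:R * (2 * m%:R - k%:R))).
Proof. by rewrite /pade_coef big_ord_recr. Qed.

Lemma pade_coef_eq0 k : (m < k)%N -> pade_coef k = 0.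
Proof.
elim: k => [|k IH] //; rewrite ltnS leq_eqVlt => /orP[/eqP <-|mk].
  by rewrite pade_coefS subrr !mul0r mulr0.
by rewrite pade_coefS IH // mul0r.
Qed.

Lemma coef_pade_poly k : pade_poly`_k = pade_coef k.
Proof. by rewrite coef_poly; case: ltnP => // mk; rewrite pade_coef_eq0. Qed.

Lemma size_pade_poly_leq : (size pade_poly <= m.+1)%N.
Proof. exact: size_poly. Qed.

Lemma pade_poly_at0 : pade_poly.[0] = 1.
Proof. by rewrite horner_coef0 coef_pade_poly pade_coef0. Qed.

Lemma dvdp_pade_op_pade_poly : 'X^(2 * m) %| pade_op pade_poly.
Proof.
apply/dvdp_XnP => k k2m; rewrite coef_hyp_op !coef_pade_poly pade_coefS.
have k2m' : (2 * m%:R - k%:R : R) != 0 by rewrite subr_eq0 -(natrM _ 2 m) eqr_nat; lia.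
by field; rewrite k2m' nat1r pnatr_eq0.
Qed.

Lemma coef_eq_pade_coef (p : {poly R}) : p`_0 = 1 -> 'X^(2 * m) %| pade_op p ->
  forall k, (k <= 2 * m)%N -> p`_k = pade_coef k.
Proof.
move=> p0 hp k k2m; apply/eqP; rewrite -subr_eq0 -coef_pade_poly -coefB; apply/eqP.
have c_neq0 j : (j < 2 * m)%N -> j%:R - 2 * m%:R != 0 :> R.
  by move=> j2m; rewrite subr_eq0 -(natrM _ 2 m) eqr_nat; lia.
have d0 : (p - pade_poly)`_0 = 0 by rewrite coefB p0 coef_pade_poly pade_coef0 subrr.
have d_op : 'X^(2 * m) %| pade_op (p - pade_poly).
  by rewrite hyp_opB dvdp_sub ?dvdp_pade_op_pade_poly.
exact: (hyp_op_dvdp_Xn_coef_eq0 (a := - m%:R) (b := b - m%:R) c_neq0 d0 d_op).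
Qed.

Lemma pade_coef_gt0 k : b < 1 -> (k <= m)%N -> 0 < pade_coef k.
Proof.
move=> b_lt1; elim: k => [|k IH] km; first by rewrite pade_coef0.
have km' : (k.+1%:R : R) <= m%:R by rewrite ler_nat.
have k0 : (0 : R) <= k%:R := ler0n _ _.
rewrite -natr1 in km'.
rewrite pade_coefS mulr_gt0 ?IH ?(ltnW km) // divr_gt0 ?mulr_gt0 ?ltr0n //; lra.
Qed.

Lemma pade_coef_ge0 k : b < 1 -> 0 <= pade_coef k.
Proof.
move=> b_lt1; case: (leqP k m) => [km|mk]; first exact/ltW/pade_coef_gt0.
by rewrite pade_coef_eq0.
Qed.

Lemma coef_pade_poly_ge0 k : b < 1 -> 0 <= pade_poly`_k.
Proof. by move=> b_lt1; rewrite coef_pade_poly pade_coef_ge0. Qed.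

Lemma size_pade_poly : b < 1 -> size pade_poly = m.+1.
Proof. by move=> b_lt1; rewrite size_poly_eq // gt_eqF ?pade_coef_gt0. Qed.

Lemma pade_poly_gt0 t : b < 1 -> (0 < m)%N -> 0 <= t -> 0 < pade_poly.[t].
Proof.
move=> b_lt1 m_gt0 t0.
have := horner_ge_coef0_coefn m_gt0 size_pade_poly_leq (coef_pade_poly_ge0 ^~ b_lt1) t0.
apply: lt_le_trans; rewrite coef_pade_poly pade_coef0 ltr_pwDl //.
by rewrite mulr_ge0 ?coef_pade_poly_ge0 ?exprn_ge0.
Qed.

End PadeCoefficients.

Lemma gbinom0 (R : realType) (a : R) : gbinom a 0 = 1.
Proof. by rewrite /gbinom big_ord0. Qed.

Lemma gbinomS (R : realType) (a : R) k :
  gbinom a k.+1 = gbinom a k * ((a - k%:R) / k.+1%:R).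
Proof. by rewrite /gbinom big_ord_recr. Qed.

Section BinomialSeries.
Variables (R : realType) (alpha : R).

Definition binom_trunc (N : nat) : {poly R} := \poly_(i < N.+1) gbinom (- alpha) i.

Lemma dvdp_binom_op_trunc N : 'X^N %| binom_op alpha (binom_trunc N).
Proof.
apply/dvdp_XnP => k kN.
have k1N : (k.+1 < N.+1)%N by [].
have kN1 : (k < N.+1)%N by apply: ltnW.
rewrite /binom_op mulrDl mul1r !coefD coefXM coefCM !coef_deriv !coef_poly k1N kN1 gbinomS.
case: k {k1N kN1} kN => [|k] kN /=; first by field.
have -> : (k.+1 < N.+1)%N by exact: ltnW.
by field; rewrite -natrD pnatr_eq0.
Qed.

Lemma pade_poly_residual m : 'X^((2 * m).+1) %|
  pade_poly m (- alpha) * binom_trunc (2 * m) - pade_poly m alpha.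
Proof.
set Q := pade_poly m (- alpha); set F := binom_trunc (2 * m).
have QF_op : 'X^(2 * m) %| hyp_op (- m%:R) (alpha - m%:R) (- (2 * m%:R)) (Q * F).
  rewrite -(Gauss_dvdpr _ (coprimep_Xn_1addX _ _)).
  have := hyp_op_euler (- m%:R) (- alpha - m%:R) alpha Q F.
  have -> : - m%:R + (- alpha - m%:R) + alpha = - (2 * m%:R) by ring.
  have -> : - alpha - m%:R + alpha = - m%:R by ring.
  have -> : - m%:R + alpha = alpha - m%:R by ring.
  move=> ->; apply: dvdp_add; [apply: dvdp_add|]; apply: dvdp_mull.
  - exact: dvdp_pade_op_pade_poly.
  - exact: dvdp_binom_op_trunc.
  - exact/dvdp_Xn_Xderiv/dvdp_binom_op_trunc.
have QF0 : (Q * F)`_0 = 1.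
  by rewrite coef0M coef_pade_poly pade_coef0 coef_poly gbinom0 mulr1.
apply/dvdp_XnP => k k2m; rewrite coefB coef_pade_poly.
by rewrite (coef_eq_pade_coef QF0 QF_op) ?subrr.
Qed.

Lemma twisted_wronskian_pade m :
  twisted_wronskian alpha (pade_poly m alpha) (pade_poly m (- alpha)) =
  (alpha * pade_coef m alpha m * pade_coef m (- alpha) m) *: 'X^(2 * m).
Proof.
set P := pade_poly m alpha; set Q := pade_poly m (- alpha).
have sP : (size P <= m.+1)%N := size_pade_poly_leq _ _.
have sQ : (size Q <= m.+1)%N := size_pade_poly_leq _ _.
have Z_dvd : 'X^(2 * m) %| twisted_wronskian alpha P Q.
  have E_dvd := pade_poly_residual m; set E := _ - _ in E_dvd.
  have E_dvd' : 'X^(2 * m) %| E := dvdp_trans (dvdp_exp2l _ (leqnSn _)) E_dvd.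
  have -> : P = Q * binom_trunc (2 * m) - E by rewrite opprB addrC subrK.
  rewrite twisted_wronskian_residual.
  apply: dvdp_add; [apply: dvdp_sub|]; apply: dvdp_mull => //.
    exact: dvdp_binom_op_trunc.
  by apply: dvdp_sub; apply: dvdp_mulr => //; apply: dvdp_Xn_deriv.
rewrite (dvdp_Xn_size_eq (size_twisted_wronskian _ sP sQ) Z_dvd).
by rewrite coef_twisted_wronskian_top // !coef_pade_poly.
Qed.

Hypothesis alpha01 : 0 < alpha < 1.

Lemma pade_poly_uniq m P Q : is_pade_mm m (gbinom (- alpha)) P Q ->
  P = pade_poly m alpha /\ Q = pade_poly m (- alpha).
Proof.
case/andP: alpha01 => alpha_gt0 alpha_lt1; have Nalpha_lt1 : - alpha < 1 by lra.
move=> pade; have [sP sQ Q_at0 _] := pade.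
apply: (pade_uniq (m := m) (F := binom_trunc (2 * m))) => //.
- exact: size_pade_poly_leq.
- exact: size_pade_poly.
- exact: pade_poly_at0.
- apply: coprimep_twisted_wronskian (twisted_wronskian_pade m); last first.
    by rewrite pade_poly_at0 oner_eq0.
  by rewrite !mulf_neq0 ?gt_eqF ?pade_coef_gt0.
- exact: dvdp_pade_mm pade.
- exact: pade_poly_residual.
Qed.

Lemma pade_wronskian_lt0 m t : (0 < m)%N -> 0 <= t ->
  ((pade_poly m alpha)^`() * pade_poly m (- alpha)
   - pade_poly m alpha * (pade_poly m (- alpha))^`()).[t] < 0.
Proof.
case/andP: alpha01 => alpha_gt0 alpha_lt1; have Nalpha_lt1 : - alpha < 1 by lra.
move=> m_gt0 t0; apply: (wronskian_lt0 alpha_gt0 m_gt0) => //.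
- exact: size_pade_poly_leq.
- exact: size_pade_poly_leq.
- by move=> i; apply: coef_pade_poly_ge0.
- by move=> i; apply: coef_pade_poly_ge0.
- by rewrite coef_pade_poly pade_coef0.
- by rewrite coef_pade_poly pade_coef0.
- by rewrite !coef_pade_poly twisted_wronskian_pade.
Qed.

End BinomialSeries.

Theorem mainTheorem3 (R : realType) (alpha : R) (m : nat) (P Q : {poly R}) :
  0 < alpha < 1 -> (1 <= m)%N ->
  is_pade_mm m (gbinom (- alpha)) P Q ->
  (forall t : R, 0 <= t -> Q.[t] != 0) /\
  (forall s t : R, 0 <= s -> s < t -> P.[t] / Q.[t] < P.[s] / Q.[s]).
Proof.
move=> alpha01 m_gt0 /(pade_poly_uniq alpha01) [-> ->].
have Nalpha_lt1 : - alpha < 1 by case/andP: alpha01 => alpha_gt0 _; lra.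
have Q_neq0 t : 0 <= t -> (pade_poly m (- alpha)).[t] != 0.
  by move=> t0; rewrite gt_eqF ?pade_poly_gt0.
split=> //; apply: poly_ratio_decr => // x x0.
exact: pade_wronskian_lt0.
Qed.
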